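(* Let $\mathcal{A}:\mathbb{C}^{m\times n}\to\mathbb{C}^p$ be linear with rank-restricted isometry constant $\delta_r(\mathcal{A})$. Let $X,Y\in\mathbb{C}^{m\times n}$ satisfy $\langle X,Y\rangle=\mathrm{tr}(Y^HX)=0$ and $\mathrm{rank}(X+\alpha Y)\le r$ for all $\alpha\in\mathbb{C}$. Then $|\langle\mathcal{A}X,\mathcal{A}Y\rangle|\le\sqrt2\,\delta_r(\mathcal{A})\|X\|_F\|Y\|_F$, where $\langle u,v\rangle=v^Hu$ on $\mathbb{C}^p$.
   Context: $\|\cdot\|_F$ is the Frobenius norm and $\|\cdot\|_2$ the Euclidean norm. $\delta_r(\mathcal{A})$ is the smallest $\delta\ge0$ such that $(1-\delta)\|X\|_F^2\le\|\mathcal{A}X\|_2^2\le(1+\delta)\|X\|_F^2$ for all $X$ with $\mathrm{rank}(X)\le r$. *)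

From HB Require Import structures.
From mathcomp Require Import all_boot all_order all_algebra.
From mathcomp Require Import complex.
From mathcomp Require Import classical_sets reals.
Set Implicit Arguments. Unset Strict Implicit. Unset Printing Implicit Defensive.
Import Order.TTheory GRing.Theory Num.Theory.
Local Open Scope ring_scope.
Local Open Scope complex_scope.

Section Defs.
Variable R : realType.
Local Notation C := R[i].

Definition adjmx (m n : nat) (Y : 'M[C]_(m, n)) : 'M[C]_(n, m) :=
  map_mx (@conjc R) Y^T.

Definition innerM (m n : nat) (X Y : 'M[C]_(m, n)) : C := \tr (adjmx Y *m X).

Definition innerV (p : nat) (u v : 'cV[C]_p) : C := (adjmx v *m u) ord0 ord0.

Definition frob2 (m n : nat) (X : 'M[C]_(m, n)) : R :=
  \sum_(i < m) \sum_(j < n) ComplexField.Normc.normc (X i j) ^+ 2.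
Definition frob (m n : nat) (X : 'M[C]_(m, n)) : R := Num.sqrt (frob2 X).

Definition eucl2 (p : nat) (u : 'cV[C]_p) : R :=
  \sum_(i < p) ComplexField.Normc.normc (u i ord0) ^+ 2.

Definition RIP (m n p r : nat) (A : {linear 'M[C]_(m, n) -> 'cV[C]_p}) (d : R) :=
  0 <= d /\ forall X : 'M[C]_(m, n), (\rank X <= r)%N ->
    (1 - d) * frob2 X <= eucl2 (A X) <= (1 + d) * frob2 X.

Definition delta_r (m n p r : nat) (A : {linear 'M[C]_(m, n) -> 'cV[C]_p}) : R :=
  inf [set d | RIP r A d].
End Defs.

(** Fix an admissible RIP constant [d] and a scalar [b].  Since [X + bY] and
    [X - bY] have rank at most [r] and [<X,Y> = 0], the RIP bounds on
    [|A(X + bY)|^2] from above and on [|A(X - bY)|^2] from below subtract to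
    [2 Re (b^* <AX,AY>) <= d (|X|^2 + |b|^2 |Y|^2)].  Choosing [b = +-|X|/|Y|],
    real and then purely imaginary, bounds both [|Re <AX,AY>|] and
    [|Im <AX,AY>|] by [d |X| |Y|], which gives the factor [sqrt 2]; finally
    pass to the infimum over [d] (the RIP constants form a nonempty set since
    [A] is bounded). *)
From HB Require Import structures.
From mathcomp Require Import all_boot all_order all_algebra.
From mathcomp Require Import complex.
From mathcomp Require Import classical_sets reals.
From mathcomp Require Import ring lra.
Set Implicit Arguments. Unset Strict Implicit. Unset Printing Implicit Defensive.
Import Order.TTheory GRing.Theory Num.Theory.
Local Open Scope ring_scope.
Local Open Scope complex_scope.

Section ComplexNorm.
Variable R : realType.
Local Notation C := R[i].
Local Notation Re := (@complex.Re R).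
Local Notation Im := (@complex.Im R).
Local Notation normc := (@ComplexField.Normc.normc R).

Lemma normc_sqr (z : C) : normc z ^+ 2 = Re z ^+ 2 + Im z ^+ 2.
Proof. by case: z => a b /=; rewrite sqr_sqrtr // addr_ge0 ?sqr_ge0. Qed.

Lemma normc_sqrD (u v : C) :
  normc (u + v) ^+ 2 = normc u ^+ 2 + normc v ^+ 2 + 2 * Re (v^* * u).
Proof. by rewrite !normc_sqr; case: u => a b; case: v => c d /=; ring. Qed.

Lemma normc_sqrD_le (u v : C) :
  normc (u + v) ^+ 2 <= 2 * normc u ^+ 2 + 2 * normc v ^+ 2.
Proof.
rewrite !normc_sqr; case: u => a b; case: v => c d /=.
have := sqr_ge0 (a - c); have := sqr_ge0 (b - d).
rewrite !sqrrB !sqrrD; lra.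
Qed.

Lemma normc_le_sqrt2 (z : C) (K : R) :
  `|Re z| <= K -> `|Im z| <= K -> normc z <= Num.sqrt 2 * K.
Proof.
case: z => a b /= hRe hIm; have K0 : 0 <= K := le_trans (normr_ge0 _) hRe.
have sq_le x : `|x| <= K -> x ^+ 2 <= K ^+ 2.
  by move=> hx; rewrite -real_normK ?num_real // lerXn2r ?nnegrE.
rewrite -[K in _ * K]ger0_norm // -sqrtr_sqr -sqrtrM //; apply: ler_wsqrtr.
by have := sq_le _ hRe; have := sq_le _ hIm; lra.
Qed.

End ComplexNorm.

Section FrobeniusNorm.
Variable R : realType.
Local Notation C := R[i].
Local Notation Re := (@complex.Re R).
Local Notation normc := (@ComplexField.Normc.normc R).
Implicit Types (m n p : nat).

Lemma innerME m n (X Y : 'M[C]_(m, n)) :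
  innerM X Y = \sum_(i < m) \sum_(j < n) (Y i j)^* * X i j.
Proof.
rewrite /innerM /mxtrace exchange_big; apply: eq_bigr => j _; rewrite mxE.
by apply: eq_bigr => i _; rewrite !mxE.
Qed.

Lemma innerM0l m n (Y : 'M[C]_(m, n)) : innerM 0 Y = 0.
Proof. by rewrite /innerM mulmx0 mxtrace0. Qed.

Lemma innerM0r m n (X : 'M[C]_(m, n)) : innerM X 0 = 0.
Proof. by rewrite /innerM /adjmx trmx0 map_mx0 mul0mx mxtrace0. Qed.

Lemma innerV_innerM p (u v : 'cV[C]_p) : innerV u v = innerM u v.
Proof. by rewrite /innerM trace_mx11. Qed.

Lemma eucl2_frob2 p (u : 'cV[C]_p) : eucl2 u = frob2 u.
Proof. by apply: eq_bigr => i _; rewrite big_ord1. Qed.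

Lemma frob2_entry_le m n (X : 'M[C]_(m, n)) i j : normc (X i j) ^+ 2 <= frob2 X.
Proof.
have sum_ge_term k (F : 'I_k -> R) l : (forall l', 0 <= F l') -> F l <= \sum_l' F l'.
  by move=> F0; rewrite (bigD1 l) //= lerDl sumr_ge0.
apply: le_trans (sum_ge_term _ _ i _).
  by apply: sum_ge_term => j'; apply: sqr_ge0.
by move=> i'; apply: sumr_ge0 => j' _; apply: sqr_ge0.
Qed.

Lemma frob2_ge0 m n (X : 'M[C]_(m, n)) : 0 <= frob2 X.
Proof. by apply: sumr_ge0 => i _; apply: sumr_ge0 => j _; apply: sqr_ge0. Qed.

Lemma frob_ge0 m n (X : 'M[C]_(m, n)) : 0 <= frob X.
Proof. exact: sqrtr_ge0. Qed.

Lemma frob_sqr m n (X : 'M[C]_(m, n)) : frob X ^+ 2 = frob2 X.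
Proof. by rewrite sqr_sqrtr // frob2_ge0. Qed.

Lemma frob_gt0 m n (X : 'M[C]_(m, n)) : X != 0 -> 0 < frob X.
Proof.
move=> X0; have /existsP[i /existsP[j Xij0]] : [exists i, exists j, X i j != 0].
  apply: contraNT X0 => /existsPn X0; apply/eqP/matrixP => i j; rewrite mxE.
  by have /existsPn/(_ j)/negPn/eqP := X0 i.
rewrite /frob sqrtr_gt0; apply: lt_le_trans (frob2_entry_le X i j).
by rewrite lt_def sqr_ge0 andbT sqrf_eq0;
  apply: contra Xij0 => /eqP/ComplexField.Normc.eq0_normc ->.
Qed.

Lemma frob2Z m n (c : C) (X : 'M[C]_(m, n)) : frob2 (c *: X) = normc c ^+ 2 * frob2 X.
Proof.
rewrite /frob2 mulr_sumr; apply: eq_bigr => i _; rewrite mulr_sumr.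
by apply: eq_bigr => j _; rewrite mxE ComplexField.Normc.normcM exprMn.
Qed.

Lemma frob2_addZ m n (X Y : 'M[C]_(m, n)) (b : C) :
  frob2 (X + b *: Y) = frob2 X + normc b ^+ 2 * frob2 Y + 2 * Re (b^* * innerM X Y).
Proof.
rewrite /frob2 innerME !mulr_sumr raddf_sum mulr_sumr -!big_split /=.
apply: eq_bigr => i _; rewrite !mulr_sumr raddf_sum mulr_sumr -!big_split /=.
apply: eq_bigr => j _; rewrite !mxE normc_sqrD ComplexField.Normc.normcM exprMn.
by rewrite rmorphM mulrA.
Qed.

Lemma frob2D_le m n (X Y : 'M[C]_(m, n)) : frob2 (X + Y) <= 2 * frob2 X + 2 * frob2 Y.
Proof.
rewrite /frob2 !mulr_sumr -big_split; apply: ler_sum => i _.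
rewrite !mulr_sumr -big_split; apply: ler_sum => j _.
by rewrite mxE normc_sqrD_le.
Qed.

Lemma frob2_sum_le m n N (W : 'I_N -> 'M[C]_(m, n)) :
  frob2 (\sum_(k < N) W k) <= 2 ^+ N * \sum_(k < N) frob2 (W k).
Proof.
elim: N W => [|N IH] W.
  rewrite !big_ord0 mulr0 -(scale0r (0 : 'M[C]_(m, n))) frob2Z.
  by rewrite ComplexField.Normc.normc0 expr0n mul0r.
rewrite !big_ord_recl exprS -mulrA mulrDr; apply: le_trans (frob2D_le _ _) _.
rewrite mulrDr lerD ?ler_wpM2l ?IH // ler_peMl ?frob2_ge0 // exprn_ege1 //.
by lra.
Qed.

End FrobeniusNorm.

Lemma frob2_linear_le (R : realType) m n p q
    (A : {linear 'M[R[i]]_(m, n) -> 'M[R[i]]_(p, q)}) :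
  exists2 K, 0 <= K & forall X, frob2 (A X) <= K * frob2 X.
Proof.
pose M := \sum_(i < m) \sum_(j < n) frob2 (A (delta_mx i j)).
have M0 : 0 <= M by do 2!apply: sumr_ge0 => ? _; apply: frob2_ge0.
exists (2 ^+ m * 2 ^+ n * M); first by rewrite !mulr_ge0 ?exprn_ge0.
move=> X; rewrite {1}(matrix_sum_delta X) linear_sum.
apply: le_trans (frob2_sum_le _) _; rewrite -!mulrA ler_wpM2l ?exprn_ge0 //.
have row_le i : frob2 (A (\sum_(j < n) X i j *: delta_mx i j))
    <= 2 ^+ n * (\sum_(j < n) frob2 (A (delta_mx i j)) * frob2 X).
  rewrite linear_sum; apply: le_trans (frob2_sum_le _) _.
  rewrite ler_wpM2l ?exprn_ge0 //; apply: ler_sum => j _.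
  by rewrite linearZ frob2Z mulrC ler_wpM2l ?frob2_ge0 ?frob2_entry_le.
apply: le_trans (ler_sum _ (fun i _ => row_le i)) _.
rewrite -mulr_sumr ler_wpM2l ?exprn_ge0 // /M mulr_suml.
by apply: ler_sum => i _; rewrite mulr_suml.
Qed.

Lemma norm_le_of_quadratic_bound (R : realFieldType) (z d x y : R) : 0 < x -> 0 < y ->
  (forall s, 2 * s * z <= d * (x ^+ 2 + s ^+ 2 * y ^+ 2)) -> `|z| <= d * x * y.
Proof.
move=> x0 y0 hz; pose s := x / y.
have s0 : 0 < s by rewrite divr_gt0.
have xE : x = s * y by rewrite divfK // gt_eqF.
clearbody s.
have := hz s; have := hz (- s); rewrite xE sqrrN !exprMn => hneg hpos.
by rewrite ler_norml; apply/andP; split; rewrite -(ler_pM2l s0); lra.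
Qed.

Section RestrictedIsometry.
Variables (R : realType) (m n p r : nat).
Variable A : {linear 'M[R[i]]_(m, n) -> 'cV[R[i]]_p}.
Local Notation C := R[i].
Local Notation Re := (@complex.Re R).
Local Notation normc := (@ComplexField.Normc.normc R).

Lemma rip_exists : exists d, RIP r A d.
Proof.
have [K K0 AK] := frob2_linear_le A.
exists (1 + K); split=> [|X _]; first by rewrite addr_ge0.
rewrite eucl2_frob2; have := AK X; have := frob2_ge0 X; have := frob2_ge0 (A X).
by move=> AX0 X0 AXK; apply/andP; split; nra.
Qed.

Lemma rip_Re_inner_le d (X Y : 'M[C]_(m, n)) : RIP r A d -> innerM X Y = 0 ->
    (forall a : C, (\rank (X + a *: Y)%R <= r)%N) ->
  forall b : C, 2 * Re (b^* * innerV (A X) (A Y)) <= d * (frob2 X + normc b ^+ 2 * frob2 Y).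
Proof.
move=> [_ rip] XY0 rkXY b.
have /andP[_ upper] := rip _ (rkXY b).
have /andP[lower _] := rip _ (rkXY (- b)).
move: upper lower; rewrite !linearD !linearZ /= !eucl2_frob2 !frob2_addZ innerV_innerM.
rewrite XY0 !mulr0 !addr0 normcN rmorphN mulNr raddfN /=.
move=> upper lower; lra.
Qed.

Lemma rip_inner_le d (X Y : 'M[C]_(m, n)) : RIP r A d -> innerM X Y = 0 ->
    (forall a : C, (\rank (X + a *: Y)%R <= r)%N) ->
  normc (innerV (A X) (A Y)) <= Num.sqrt 2 * d * frob X * frob Y.
Proof.
move=> rip XY0 rkXY; have d0 : 0 <= d by case: rip.
have rhs0 : 0 <= Num.sqrt 2 * d * frob X * frob Y.
  by rewrite !mulr_ge0 ?sqrtr_ge0 ?frob_ge0.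
have [X0 | X0] := eqVneq X 0.
  by move: rhs0; rewrite X0 linear0 innerV_innerM innerM0l ComplexField.Normc.normc0.
have [Y0 | Y0] := eqVneq Y 0.
  by move: rhs0; rewrite Y0 linear0 innerV_innerM innerM0r ComplexField.Normc.normc0.
have x0 := frob_gt0 X0; have y0 := frob_gt0 Y0.
have := rip_Re_inner_le rip XY0 rkXY; rewrite -!frob_sqr.
case: (innerV _ _) => a b hRe.
have -> : Num.sqrt 2 * d * frob X * frob Y = Num.sqrt 2 * (d * frob X * frob Y).
  by rewrite !mulrA.
apply: normc_le_sqrt2; apply: norm_le_of_quadratic_bound => // s.
- by have := hRe (Complex s 0); rewrite normc_sqr /=; lra.
- by have := hRe (Complex 0 s); rewrite normc_sqr /=; lra.
Qed.

End RestrictedIsometry.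

Lemma ler_wpM_inf (R : realType) (S : set R) (c z : R) : (S !=set0)%classic -> 0 <= c ->
  (forall d, S d -> z <= c * d) -> z <= c * inf S.
Proof.
move=> [d0 Sd0] c0 hz; have [c_eq0 | c_neq0] := eqVneq c 0.
  by have := hz _ Sd0; rewrite c_eq0 !mul0r.
have c_gt0 : 0 < c by rewrite lt_def c_neq0.
rewrite -ler_pdivrMl //; apply: lb_le_inf => [|d Sd]; first by exists d0.
by rewrite ler_pdivrMl // hz.
Qed.

Theorem proposition5 (R : realType) (m n p r : nat)
  (A : {linear 'M[R[i]]_(m, n) -> 'cV[R[i]]_p}) (X Y : 'M[R[i]]_(m, n)) :
  innerM X Y = 0 ->
  (forall a : R[i], (\rank (X + a *: Y)%R <= r)%N) ->
  ComplexField.Normc.normc (innerV (A X) (A Y)) <= Num.sqrt 2 * delta_r r A * frob X * frob Y.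
Proof.
move=> XY0 rkXY.
have scaleE d : Num.sqrt 2 * d * frob X * frob Y = Num.sqrt 2 * frob X * frob Y * d.
  by ring.
rewrite scaleE; apply: ler_wpM_inf.
- by have [d ripd] := rip_exists r A; exists d.
- by rewrite !mulr_ge0 ?sqrtr_ge0 ?frob_ge0.
- by move=> d ripd; rewrite -scaleE; apply: rip_inner_le ripd XY0 rkXY.
Qed.
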